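(* Let $a,b>0$, $I=[g(b),b]$, $J=[f(a),a]$, and let $g$ and $f$ be decreasing homeomorphisms of $I$ and $J$ onto their images $g(I)\subseteq I$ and $f(J)\subseteq J$ such that (1) $0$ is an attracting fixed point of both $f$ and $g$; (2) $g^2(x)<x$ for all $x\in(0,b]$; (3) $f^2(x)<x$ for all $x\in(0,a]$. Then there exists a (not necessarily unique) homeomorphism $h:[f(a),a]\to[g(b),b]$ such that $g(h(x))=h(f(x))$ for all $x\in[f(a),a]$.
   Context: A fixed point $p$ of a homeomorphism $\phi$ is attracting if there is a neighbourhood $U$ of $p$ with $\phi^n(x)\to p$ for all $x\in U$. $\phi^2$ denotes $\phi\circ\phi$. *)

From Stdlib Require Import Reals.
Open Scope R_scope.

Definition Icc (lo hi : R) : R -> Prop := fun x => lo <= x <= hi.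

Definition image (f : R -> R) (A : R -> Prop) : R -> Prop :=
  fun y => exists x, A x /\ y = f x.

Definition continuous_on (D : R -> Prop) (f : R -> R) : Prop :=
  forall x, D x -> forall eps, 0 < eps ->
    exists delta, 0 < delta /\
      forall y, D y -> Rabs (y - x) < delta -> Rabs (f y - f x) < eps.

Definition homeo_onto (A B : R -> Prop) (h : R -> R) : Prop :=
  (forall x, A x -> B (h x)) /\
  exists hinv : R -> R,
    (forall y, B y -> A (hinv y)) /\
    (forall x, A x -> hinv (h x) = x) /\
    (forall y, B y -> h (hinv y) = y) /\
    continuous_on A h /\ continuous_on B hinv.

Definition decreasing_on (D : R -> Prop) (f : R -> R) : Prop :=
  forall x y, D x -> D y -> x < y -> f y < f x.

Definition attracting_fixed_point (D : R -> Prop) (f : R -> R) (p : R) : Prop :=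
  D p /\ f p = p /\
  exists eps, 0 < eps /\
    forall x, D x -> Rabs (x - p) < eps -> Un_cv (fun n => Nat.iter n f x) p.

From Stdlib Require Import Reals Lra Lia ClassicalEpsilon.
Open Scope R_scope.

(* F := f o f and G := g o g are increasing maps of [0, a] and [0, b] that push
   every nonzero point towards 0, so (F a, a] and (G b, b] are fundamental
   domains: every x in (0, a] is F^n z for exactly one n and one z in (F a, a].
   An (affine) increasing bijection between the fundamental domains therefore
   extends to an increasing conjugacy H from F to G on [0, a].  The conjugacy h
   from f to g is H on [0, a], and on [f a, 0) it is forced by h (f z) = g (H z).
   Attraction of 0 already follows from (2), (3) and continuity, so only the
   fixed-point part of (1) is needed. *)

Definition increasing_on (D : R -> Prop) (F : R -> R) : Prop :=
  forall x y, D x -> D y -> x < y -> F x < F y.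

Lemma increasing_on_le D F x y :
  increasing_on D F -> D x -> D y -> x <= y -> F x <= F y.
Proof.
  intros Hinc Hx Hy Hxy. destruct (Req_dec x y) as [->|Hne]; [lra|].
  left; apply Hinc; auto; lra.
Qed.

Lemma increasing_on_lt_rev D F x y :
  increasing_on D F -> D x -> D y -> F x < F y -> x < y.
Proof.
  intros Hinc Hx Hy Hlt. destruct (Rlt_or_le x y) as [H|H]; [exact H|].
  pose proof (increasing_on_le D F y x Hinc Hy Hx H); lra.
Qed.

Lemma decreasing_on_lt_rev D f x y :
  decreasing_on D f -> D x -> D y -> f x < f y -> y < x.
Proof.
  intros Hdec Hx Hy Hlt. destruct (Rtotal_order x y) as [H|[->|H]]; [|lra|exact H].
  pose proof (Hdec x y Hx Hy H); lra.
Qed.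

Lemma decreasing_on_inj D f x y :
  decreasing_on D f -> D x -> D y -> f x = f y -> x = y.
Proof.
  intros Hdec Hx Hy E. destruct (Rtotal_order x y) as [H|[H|H]]; [|exact H|].
  - pose proof (Hdec x y Hx Hy H); lra.
  - pose proof (Hdec y x Hy Hx H); lra.
Qed.

Lemma continuous_on_subset (D D' : R -> Prop) phi :
  (forall x, D' x -> D x) -> continuous_on D phi -> continuous_on D' phi.
Proof.
  intros Hsub Hc x Hx eps Heps. destruct (Hc x (Hsub x Hx) eps Heps) as [d [Hd Hd']].
  exists d; split; auto.
Qed.

Lemma continuous_on_comp (D E : R -> Prop) phi psi :
  (forall x, D x -> E (phi x)) -> continuous_on D phi -> continuous_on E psi ->
  continuous_on D (fun x => psi (phi x)).
Proof.
  intros Hmaps Hphi Hpsi x Hx eps Heps.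
  destruct (Hpsi (phi x) (Hmaps x Hx) eps Heps) as [d1 [Hd1 H1]].
  destruct (Hphi x Hx d1 Hd1) as [d2 [Hd2 H2]].
  exists d2; split; auto.
Qed.

Lemma continuous_on_cv (D : R -> Prop) phi u l :
  continuous_on D phi -> D l -> (forall n, D (u n)) -> Un_cv u l ->
  Un_cv (fun n => phi (u n)) (phi l).
Proof.
  intros Hc Hl Hu Hcv eps Heps.
  destruct (Hc l Hl eps Heps) as [d [Hd Hd']].
  destruct (Hcv d Hd) as [N HN].
  exists N; intros n Hn. apply Hd'; [apply Hu|apply HN, Hn].
Qed.

Lemma clamp_lipschitz c d x t : c <= d ->
  Rabs (Rmax c (Rmin d x) - Rmax c (Rmin d t)) <= Rabs (x - t).
Proof.
  intros Hcd. unfold Rmax, Rmin; repeat destruct Rle_dec; unfold Rabs;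
  repeat destruct Rcase_abs; lra.
Qed.

(* Clamping the argument to [c, d] makes phi continuous on all of R, so that
   IVT_cor applies. *)
Lemma IVT_on c d phi y : c <= d -> continuous_on (Icc c d) phi ->
  (phi c <= y <= phi d \/ phi d <= y <= phi c) ->
  exists x, Icc c d x /\ phi x = y.
Proof.
  intros Hcd Hc Hy.
  set (clamp := fun t => Rmax c (Rmin d t)).
  assert (Hclamp : forall t, Icc c d (clamp t)).
  { intros t; unfold clamp, Icc, Rmax, Rmin; repeat destruct Rle_dec; lra. }
  assert (Hclamp_id : forall t, Icc c d t -> clamp t = t).
  { intros t [H1 H2]; unfold clamp, Rmax, Rmin; repeat destruct Rle_dec; lra. }
  set (psi := fun t => phi (clamp t) - y).
  assert (Hpsi : continuity psi).
  { intros t eps Heps.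
    destruct (Hc (clamp t) (Hclamp t) eps Heps) as [del [Hdel Hd]].
    exists del; split; [lra|]. intros x [_ Hx]. simpl in *. unfold Rdist, psi in *.
    replace (phi (clamp x) - y - (phi (clamp t) - y)) with (phi (clamp x) - phi (clamp t))
      by ring.
    apply Hd; [apply Hclamp|]. eapply Rle_lt_trans; [apply clamp_lipschitz; lra|exact Hx]. }
  destruct (IVT_cor psi c d Hpsi Hcd) as [z [Hz Hpz]].
  { unfold psi. rewrite (Hclamp_id c), (Hclamp_id d) by (unfold Icc; lra). nra. }
  exists z. split; [exact Hz|]. unfold psi in Hpz. rewrite Hclamp_id in Hpz by exact Hz. lra.
Qed.

Section IncreasingOnto.
Variables (c d e k : R) (phi : R -> R).
Hypothesis phi_inc : increasing_on (Icc c d) phi.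
Hypothesis phi_maps : forall x, Icc c d x -> Icc e k (phi x).
Hypothesis phi_onto : forall y, Icc e k y -> exists x, Icc c d x /\ phi x = y.

Lemma increasing_onto_upper x eps : Icc c d x -> 0 < eps ->
  exists delta, 0 < delta /\
    forall y, Icc c d y -> x <= y < x + delta -> phi y < phi x + eps.
Proof.
  intros Hx Heps. pose proof (phi_maps x Hx) as Hpx.
  destruct (Rlt_or_le (phi x) k) as [Hlt|Hge].
  - set (t := Rmin (phi x + eps / 2) k).
    assert (Ht : phi x < t <= phi x + eps / 2).
    { unfold t, Rmin; destruct Rle_dec; lra. }
    destruct (phi_onto t) as [x1 [Hx1 Hpx1]].
    { unfold t, Icc in *; unfold Rmin; destruct Rle_dec; lra. }
    assert (Hxx1 : x < x1) by (apply (increasing_on_lt_rev (Icc c d) phi); auto; lra).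
    exists (x1 - x); split; [lra|]. intros y Hy [_ Hy1].
    assert (phi y < phi x1) by (apply phi_inc; auto; lra). lra.
  - exists 1; split; [lra|]. intros y Hy _. pose proof (phi_maps y Hy). unfold Icc in *; lra.
Qed.

Lemma increasing_onto_lower x eps : Icc c d x -> 0 < eps ->
  exists delta, 0 < delta /\
    forall y, Icc c d y -> x - delta < y <= x -> phi x - eps < phi y.
Proof.
  intros Hx Heps. pose proof (phi_maps x Hx) as Hpx.
  destruct (Rlt_or_le e (phi x)) as [Hlt|Hge].
  - set (t := Rmax (phi x - eps / 2) e).
    assert (Ht : phi x - eps / 2 <= t < phi x).
    { unfold t, Rmax; destruct Rle_dec; lra. }
    destruct (phi_onto t) as [x1 [Hx1 Hpx1]].
    { unfold t, Icc in *; unfold Rmax; destruct Rle_dec; lra. }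
    assert (Hxx1 : x1 < x) by (apply (increasing_on_lt_rev (Icc c d) phi); auto; lra).
    exists (x - x1); split; [lra|]. intros y Hy [Hy1 _].
    assert (phi x1 < phi y) by (apply phi_inc; auto; lra). lra.
  - exists 1; split; [lra|]. intros y Hy _. pose proof (phi_maps y Hy). unfold Icc in *; lra.
Qed.

Lemma increasing_onto_continuous : continuous_on (Icc c d) phi.
Proof.
  intros x Hx eps Heps.
  destruct (increasing_onto_upper x eps Hx Heps) as [dR [HdR HR]].
  destruct (increasing_onto_lower x eps Hx Heps) as [dL [HdL HL]].
  exists (Rmin dR dL). split; [apply Rmin_glb_lt; lra|]. intros y Hy Hxy.
  pose proof (Rmin_l dR dL). pose proof (Rmin_r dR dL).
  apply Rabs_def2 in Hxy as [Hxy1 Hxy2].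
  destruct (Rle_lt_dec x y) as [Hle|Hlt].
  - pose proof (increasing_on_le _ phi x y phi_inc Hx Hy Hle).
    pose proof (HR y Hy ltac:(lra)). apply Rabs_def1; lra.
  - pose proof (phi_inc y x Hy Hx Hlt). pose proof (HL y Hy ltac:(lra)). apply Rabs_def1; lra.
Qed.

End IncreasingOnto.

Lemma increasing_onto_homeo c d e k phi :
  increasing_on (Icc c d) phi ->
  (forall x, Icc c d x -> Icc e k (phi x)) ->
  (forall y, Icc e k y -> exists x, Icc c d x /\ phi x = y) ->
  homeo_onto (Icc c d) (Icc e k) phi.
Proof.
  intros phi_inc phi_maps phi_onto.
  split; [exact phi_maps|].
  set (phi_inv := fun y => epsilon (inhabits 0) (fun x => Icc c d x /\ phi x = y)).
  assert (Hinv : forall y, Icc e k y -> Icc c d (phi_inv y) /\ phi (phi_inv y) = y).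
  { intros y Hy. exact (epsilon_spec (inhabits 0) _ (phi_onto y Hy)). }
  assert (Hinv_inc : increasing_on (Icc e k) phi_inv).
  { intros y1 y2 Hy1 Hy2 Hlt.
    destruct (Hinv y1 Hy1) as [H1 E1]. destruct (Hinv y2 Hy2) as [H2 E2].
    apply (increasing_on_lt_rev (Icc c d) phi); auto; lra. }
  assert (Hinv_phi : forall x, Icc c d x -> phi_inv (phi x) = x).
  { intros x Hx. destruct (Hinv (phi x) (phi_maps x Hx)) as [Hx' E].
    destruct (Rtotal_order (phi_inv (phi x)) x) as [H|[H|H]]; [|exact H|].
    - pose proof (phi_inc _ _ Hx' Hx H); lra.
    - pose proof (phi_inc _ _ Hx Hx' H); lra. }
  exists phi_inv. split; [|split; [|split; [|split]]].
  - intros y Hy; apply Hinv, Hy.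
  - exact Hinv_phi.
  - intros y Hy; apply Hinv, Hy.
  - exact (increasing_onto_continuous c d e k phi phi_inc phi_maps phi_onto).
  - apply (increasing_onto_continuous e k c d); auto.
    + intros y Hy; apply Hinv, Hy.
    + intros x Hx. exists (phi x); split; [apply phi_maps, Hx|apply Hinv_phi, Hx].
Qed.

Record increasing_contraction (a : R) (F : R -> R) : Prop := {
  contraction_pos : 0 < a;
  contraction_fix : F 0 = 0;
  contraction_inc : increasing_on (Icc 0 a) F;
  contraction_below : forall x, 0 < x <= a -> F x < x;
  contraction_cont : continuous_on (Icc 0 a) F }.

Section IncreasingContraction.
Variables (a : R) (F : R -> R).
Hypothesis HF : increasing_contraction a F.

Let a_pos := contraction_pos a F HF.
Let F_fix := contraction_fix a F HF.
Let F_inc := contraction_inc a F HF.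
Let F_below := contraction_below a F HF.

Lemma contraction_range x : Icc 0 a x -> 0 <= F x <= x.
Proof.
  intros Hx. destruct (Req_dec x 0) as [->|Hne]; [rewrite F_fix; lra|].
  assert (Hpos : F 0 < F x) by (apply F_inc; unfold Icc in *; lra).
  pose proof (F_below x ltac:(unfold Icc in *; lra)). rewrite F_fix in Hpos. lra.
Qed.

Lemma contraction_a_range : 0 <= F a < a.
Proof.
  pose proof (contraction_range a ltac:(unfold Icc; lra)). pose proof (F_below a ltac:(lra)). lra.
Qed.

Lemma iter_range n x : Icc 0 a x -> 0 <= Nat.iter n F x <= x.
Proof.
  intros Hx; induction n as [|n IH]; simpl; [unfold Icc in Hx; lra|].
  pose proof (contraction_range (Nat.iter n F x)). unfold Icc in *; lra.
Qed.

Lemma iter_positive n x : 0 < x <= a -> 0 < Nat.iter n F x.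
Proof.
  intros Hx; induction n as [|n IH]; simpl; [lra|].
  pose proof (iter_range n x). rewrite <- F_fix. apply F_inc; unfold Icc in *; lra.
Qed.

Lemma iter_inc n : increasing_on (Icc 0 a) (Nat.iter n F).
Proof.
  intros x y Hx Hy Hxy; induction n as [|n IH]; simpl; [exact Hxy|].
  pose proof (iter_range n x Hx). pose proof (iter_range n y Hy).
  apply F_inc; unfold Icc in *; lra.
Qed.

Lemma iter_continuous n : continuous_on (Icc 0 a) (Nat.iter n F).
Proof.
  induction n as [|n IH].
  - intros x _ eps Heps. exists eps; split; [lra|]. intros y _ Hy. exact Hy.
  - apply (continuous_on_comp _ (Icc 0 a) (Nat.iter n F) F); auto.
    + intros x Hx. pose proof (iter_range n x Hx). unfold Icc in *; lra.
    + apply contraction_cont, HF.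
Qed.

Lemma iter_a_antitone n m : (n <= m)%nat -> Nat.iter m F a <= Nat.iter n F a.
Proof.
  intros Hnm. replace m with ((m - n) + n)%nat by lia. rewrite Nat.iter_add.
  apply iter_range. pose proof (iter_range n a). unfold Icc in *; lra.
Qed.

(* The limit of the orbit of a is a fixed point of F in [0, a], hence 0. *)
Lemma iter_a_cv0 : Un_cv (fun n => Nat.iter n F a) 0.
Proof.
  set (u := fun n => Nat.iter n F a).
  assert (Hu : forall n, Icc 0 a (u n)).
  { intros n. pose proof (iter_range n a). unfold u, Icc in *; lra. }
  assert (Hdec : Un_decreasing u).
  { intros n. apply iter_a_antitone; lia. }
  assert (Hlb : has_lb u).
  { exists 0. intros x [n ->]. unfold opp_seq. pose proof (Hu n). unfold Icc in *; lra. }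
  destruct (decreasing_cv u Hdec Hlb) as [l Hl].
  assert (Hl_range : Icc 0 a l).
  { pose proof (decreasing_ineq u l Hdec Hl O). split; [|unfold u in *; simpl in *; lra].
    apply Rnot_lt_le; intros Hneg.
    destruct (Hl (- l) ltac:(lra)) as [N HN]. specialize (HN N (le_n N)).
    pose proof (Hu N). unfold Rdist, Icc in *. apply Rabs_def2 in HN. lra. }
  assert (Hfix : F l = l).
  { apply (UL_sequence (fun n => u (S n))).
    - apply (continuous_on_cv (Icc 0 a)); auto. apply contraction_cont, HF.
    - apply (CV_shift' u 1) in Hl. eapply Un_cv_ext; [|exact Hl].
      intros n; simpl; rewrite Nat.add_1_r; reflexivity. }
  replace 0 with l; [exact Hl|].
  destruct (Req_dec l 0) as [->|Hne]; [reflexivity|].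
  pose proof (F_below l). unfold Icc in *. lra.
Qed.

Lemma iter_a_between x : 0 < x <= a ->
  exists n, Nat.iter (S n) F a < x <= Nat.iter n F a.
Proof.
  intros Hx. destruct (iter_a_cv0 x ltac:(lra)) as [N HN].
  specialize (HN N (le_n N)). unfold Rdist in HN. rewrite Rminus_0_r in HN.
  apply Rabs_def2 in HN as [HN _]. clear - Hx HN.
  induction N as [|N IH]; [simpl in HN; lra|].
  destruct (Rlt_or_le (Nat.iter N F a) x) as [Hlt|Hle]; [exact (IH Hlt)|].
  exists N; split; assumption.
Qed.

Lemma iter_fundamental_domain n z : F a < z <= a ->
  Nat.iter (S n) F a < Nat.iter n F z <= Nat.iter n F a.
Proof.
  intros Hz. pose proof contraction_a_range as Ha.
  rewrite Nat.iter_succ_r. split.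
  - apply iter_inc; unfold Icc in *; lra.
  - apply (increasing_on_le (Icc 0 a)); [apply iter_inc|..]; unfold Icc in *; lra.
Qed.

Lemma iter_fundamental_lt_iff n m z w : F a < z <= a -> F a < w <= a ->
  Nat.iter n F z < Nat.iter m F w <-> (m < n)%nat \/ (n = m /\ z < w).
Proof.
  intros Hz Hw. pose proof contraction_a_range as Ha.
  pose proof (iter_fundamental_domain n z Hz). pose proof (iter_fundamental_domain m w Hw).
  split.
  - intros Hlt. destruct (Nat.lt_trichotomy m n) as [Hmn|[<-|Hnm]]; [left; exact Hmn| |].
    + right; split; [reflexivity|].
      apply (increasing_on_lt_rev (Icc 0 a) (Nat.iter m F)); [apply iter_inc|..];
        unfold Icc in *; lra.
    + pose proof (iter_a_antitone (S n) m Hnm). lra.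
  - intros [Hmn|[<- Hzw]].
    + pose proof (iter_a_antitone (S m) n Hmn). lra.
    + apply iter_inc; unfold Icc in *; lra.
Qed.

Lemma iter_fundamental_inj n m z w : F a < z <= a -> F a < w <= a ->
  Nat.iter n F z = Nat.iter m F w -> n = m /\ z = w.
Proof.
  intros Hz Hw E.
  assert (H1 : ~ ((m < n)%nat \/ (n = m /\ z < w))).
  { rewrite <- iter_fundamental_lt_iff by assumption. lra. }
  assert (H2 : ~ ((n < m)%nat \/ (m = n /\ w < z))).
  { rewrite <- iter_fundamental_lt_iff by assumption. lra. }
  assert (n = m) as <- by lia. split; [reflexivity|].
  destruct (Rtotal_order z w) as [H|[H|H]]; tauto.
Qed.

Lemma iter_fundamental_rep x : 0 < x <= a ->
  exists n z, F a < z <= a /\ Nat.iter n F z = x.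
Proof.
  intros Hx. destruct (iter_a_between x Hx) as [n Hn].
  pose proof contraction_a_range as Ha.
  destruct (IVT_on (F a) a (Nat.iter n F) x) as [z [Hz Ez]].
  - unfold Icc in *; lra.
  - apply (continuous_on_subset (Icc 0 a)); [|apply iter_continuous].
    unfold Icc in *; intros; lra.
  - left. rewrite <- Nat.iter_succ_r. lra.
  - exists n, z. split; [|exact Ez]. destruct Hz as [[Hz|<-] Hza]; [lra|].
    rewrite <- Nat.iter_succ_r in Ez. lra.
Qed.

End IncreasingContraction.

Record increasing_conjugacy (a b : R) (F G H : R -> R) : Prop := {
  conjugacy_fix : H 0 = 0;
  conjugacy_inc : increasing_on (Icc 0 a) H;
  conjugacy_range : forall x, 0 < x <= a -> 0 < H x <= b;
  conjugacy_onto : forall y, 0 < y <= b -> exists x, 0 < x <= a /\ H x = y;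
  conjugacy_eq : forall x, Icc 0 a x -> H (F x) = G (H x) }.

Section Conjugacy.
Variables (a b : R) (F G : R -> R).
Hypothesis HF : increasing_contraction a F.
Hypothesis HG : increasing_contraction b G.

Definition fundamental_map z := G b + (z - F a) * ((b - G b) / (a - F a)).

Lemma fundamental_map_inc z w : z < w -> fundamental_map z < fundamental_map w.
Proof.
  intros Hzw. pose proof (contraction_a_range a F HF). pose proof (contraction_a_range b G HG).
  assert (0 < (b - G b) / (a - F a)) by (apply Rdiv_lt_0_compat; lra).
  unfold fundamental_map. nra.
Qed.

Lemma fundamental_map_range z : F a < z <= a -> G b < fundamental_map z <= b.
Proof.
  intros Hz. pose proof (contraction_a_range a F HF). pose proof (contraction_a_range b G HG).
  assert (0 < (b - G b) / (a - F a)) by (apply Rdiv_lt_0_compat; lra).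
  assert (E : (b - G b) / (a - F a) * (a - F a) = b - G b) by (field; lra).
  unfold fundamental_map. split; nra.
Qed.

Lemma fundamental_map_onto u : G b < u <= b ->
  exists z, F a < z <= a /\ fundamental_map z = u.
Proof.
  intros Hu. pose proof (contraction_a_range a F HF). pose proof (contraction_a_range b G HG).
  exists (F a + (u - G b) * ((a - F a) / (b - G b))). unfold fundamental_map.
  assert (0 < (a - F a) / (b - G b)) by (apply Rdiv_lt_0_compat; lra).
  assert (E : (a - F a) / (b - G b) * (b - G b) = a - F a) by (field; lra).
  split; [split; nra|field; lra].
Qed.

Definition fundamental_rep x : nat * R :=
  epsilon (inhabits (O, 0))
    (fun p => F a < snd p <= a /\ Nat.iter (fst p) F (snd p) = x).

Definition conjugacy x : R :=
  if Rlt_dec 0 x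
  then Nat.iter (fst (fundamental_rep x)) G (fundamental_map (snd (fundamental_rep x)))
  else 0.

Lemma conjugacy_iter n z : F a < z <= a ->
  conjugacy (Nat.iter n F z) = Nat.iter n G (fundamental_map z).
Proof.
  intros Hz. pose proof (contraction_a_range a F HF).
  pose proof (iter_positive a F HF n z ltac:(lra)) as Hpos.
  unfold conjugacy, fundamental_rep. destruct (Rlt_dec 0 (Nat.iter n F z)) as [_|C]; [|lra].
  assert (Hrep : exists p : nat * R,
      F a < snd p <= a /\ Nat.iter (fst p) F (snd p) = Nat.iter n F z).
  { exists (n, z); split; [exact Hz|reflexivity]. }
  destruct (epsilon_spec (inhabits (O, 0)) _ Hrep) as [Hz' E].
  destruct (iter_fundamental_inj a F HF _ _ _ _ Hz' Hz E) as [-> ->]. reflexivity.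
Qed.

Lemma conjugacy_rep x : 0 < x <= a ->
  exists n z, F a < z <= a /\ x = Nat.iter n F z /\
    conjugacy x = Nat.iter n G (fundamental_map z).
Proof.
  intros Hx. destruct (iter_fundamental_rep a F HF x Hx) as [n [z [Hz <-]]].
  exists n, z. split; [exact Hz|split; [reflexivity|apply conjugacy_iter, Hz]].
Qed.

Lemma conjugacy_spec : increasing_conjugacy a b F G conjugacy.
Proof.
  pose proof (contraction_a_range a F HF). pose proof (contraction_a_range b G HG).
  assert (Hzero : conjugacy 0 = 0).
  { unfold conjugacy. destruct (Rlt_dec 0 0); [lra|reflexivity]. }
  assert (Hrange : forall x, 0 < x <= a -> 0 < conjugacy x <= b).
  { intros x Hx. destruct (conjugacy_rep x Hx) as [n [z [Hz [_ ->]]]].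
    pose proof (fundamental_map_range z Hz).
    pose proof (iter_range b G HG n (fundamental_map z) ltac:(unfold Icc; lra)).
    pose proof (iter_positive b G HG n (fundamental_map z) ltac:(lra)). lra. }
  split; [exact Hzero| |exact Hrange| |].
  - intros x y Hx Hy Hxy. unfold Icc in *.
    destruct (Req_dec x 0) as [->|Hne]; [rewrite Hzero; apply Hrange; lra|].
    destruct (conjugacy_rep x ltac:(lra)) as [n [z [Hz [-> ->]]]].
    destruct (conjugacy_rep y ltac:(lra)) as [m [w [Hw [-> ->]]]].
    pose proof (fundamental_map_range z Hz). pose proof (fundamental_map_range w Hw).
    rewrite (iter_fundamental_lt_iff b G HG) by assumption.
    rewrite (iter_fundamental_lt_iff a F HF) in Hxy by assumption.
    destruct Hxy as [Hmn|[<- Hzw]]; [left; exact Hmn|].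
    right; split; [reflexivity|apply fundamental_map_inc, Hzw].
  - intros y Hy. destruct (iter_fundamental_rep b G HG y Hy) as [m [u [Hu <-]]].
    destruct (fundamental_map_onto u Hu) as [z [Hz <-]].
    exists (Nat.iter m F z). split; [|apply conjugacy_iter, Hz].
    pose proof (iter_positive a F HF m z ltac:(lra)).
    pose proof (iter_range a F HF m z ltac:(unfold Icc; lra)). lra.
  - intros x Hx. unfold Icc in Hx.
    destruct (Req_dec x 0) as [->|Hne].
    + rewrite (contraction_fix a F HF), Hzero. symmetry; apply (contraction_fix b G HG).
    + destruct (conjugacy_rep x ltac:(lra)) as [n [z [Hz [-> ->]]]].
      exact (conjugacy_iter (S n) z Hz).
Qed.

End Conjugacy.

Record reversing_map (a : R) (f : R -> R) : Prop := {
  reversing_pos : 0 < a;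
  reversing_fix : f 0 = 0;
  reversing_zero : Icc (f a) a 0;
  reversing_maps : forall x, Icc (f a) a x -> Icc (f a) a (f x);
  reversing_dec : decreasing_on (Icc (f a) a) f;
  reversing_cont : continuous_on (Icc (f a) a) f }.

Section ReversingMap.
Variables (a : R) (f : R -> R).
Hypothesis Hf : reversing_map a f.

Let f_fix := reversing_fix a f Hf.
Let f_dec := reversing_dec a f Hf.

Lemma reversing_Icc_0 x : Icc 0 a x -> Icc (f a) a x.
Proof. pose proof (reversing_zero a f Hf). unfold Icc in *; lra. Qed.

Lemma reversing_neg x : 0 < x <= a -> f a <= f x < 0.
Proof.
  intros Hx. assert (HJ : Icc (f a) a x) by (apply reversing_Icc_0; unfold Icc; lra).
  split; [apply (reversing_maps a f Hf x HJ)|].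
  rewrite <- f_fix. apply f_dec; [apply reversing_Icc_0; unfold Icc; lra|exact HJ|lra].
Qed.

Lemma reversing_pos_of_neg x : f a <= x < 0 -> 0 < f x.
Proof.
  intros Hx. pose proof (reversing_zero a f Hf). rewrite <- f_fix.
  apply f_dec; unfold Icc in *; lra.
Qed.

Lemma reversing_square_contraction :
  (forall x, 0 < x <= a -> f (f x) < x) -> increasing_contraction a (fun x => f (f x)).
Proof.
  intros Hbelow. split.
  - apply (reversing_pos a f Hf).
  - rewrite !f_fix; reflexivity.
  - intros x y Hx Hy Hxy. apply reversing_Icc_0 in Hx, Hy.
    apply f_dec; [apply (reversing_maps a f Hf)..|apply f_dec]; auto.
  - exact Hbelow.
  - apply (continuous_on_comp _ (Icc (f a) a)).
    + intros x Hx. apply (reversing_maps a f Hf), reversing_Icc_0, Hx.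
    + apply (continuous_on_subset (Icc (f a) a)); [exact reversing_Icc_0|].
      apply (reversing_cont a f Hf).
    + apply (reversing_cont a f Hf).
Qed.

Lemma reversing_onto_neg y : f a <= y < 0 -> exists z, 0 < z <= a /\ f z = y.
Proof.
  intros Hy. pose proof (reversing_pos a f Hf).
  destruct (IVT_on 0 a f y) as [z [Hz Ez]].
  - lra.
  - apply (continuous_on_subset (Icc (f a) a)); [exact reversing_Icc_0|].
    apply (reversing_cont a f Hf).
  - rewrite f_fix. right; lra.
  - exists z. split; [|exact Ez]. destruct Hz as [[Hz0|<-] Hza]; [lra|].
    rewrite f_fix in Ez; lra.
Qed.

Definition reversing_inv y := epsilon (inhabits 0) (fun z => 0 < z <= a /\ f z = y).

Lemma reversing_inv_f x : 0 < x <= a -> reversing_inv (f x) = x.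
Proof.
  intros Hx. unfold reversing_inv.
  destruct (epsilon_spec (inhabits 0) (fun z => 0 < z <= a /\ f z = f x))
    as [Hz E]; [exists x; split; [exact Hx|reflexivity]|].
  apply (decreasing_on_inj (Icc (f a) a) f); [exact f_dec| | |exact E];
    apply reversing_Icc_0; unfold Icc; lra.
Qed.

End ReversingMap.

Section Extension.
Variables (a b : R) (f g H : R -> R).
Hypothesis Hf : reversing_map a f.
Hypothesis Hg : reversing_map b g.
Hypothesis HH : increasing_conjugacy a b (fun x => f (f x)) (fun x => g (g x)) H.

(* On [f a, 0) the extension is forced by the conjugacy equation:
   h (f z) = g (h z) = g (H z) for z in (0, a]. *)
Definition extension x := if Rle_dec 0 x then H x else g (H (reversing_inv a f x)).

Lemma extension_nonneg x : 0 <= x -> extension x = H x.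
Proof. intros Hx. unfold extension. destruct (Rle_dec 0 x); [reflexivity|lra]. Qed.

Lemma extension_f z : 0 < z <= a -> extension (f z) = g (H z).
Proof.
  intros Hz. pose proof (reversing_neg a f Hf z Hz).
  unfold extension. destruct (Rle_dec 0 (f z)); [lra|].
  rewrite reversing_inv_f; auto.
Qed.

Lemma conjugacy_nonneg x : Icc 0 a x -> 0 <= H x <= b.
Proof.
  intros Hx. pose proof (reversing_pos b g Hg). unfold Icc in Hx.
  destruct (Req_dec x 0) as [->|Hne]; [rewrite (conjugacy_fix _ _ _ _ _ HH); lra|].
  pose proof (conjugacy_range _ _ _ _ _ HH x ltac:(lra)). lra.
Qed.

Lemma extension_inc : increasing_on (Icc (f a) a) extension.
Proof.
  intros x y Hx Hy Hxy. unfold Icc in Hx, Hy.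
  destruct (Rle_lt_dec 0 x) as [Hx0|Hx0].
  - rewrite !extension_nonneg by lra. apply (conjugacy_inc _ _ _ _ _ HH); unfold Icc; lra.
  - destruct (reversing_onto_neg a f Hf x ltac:(lra)) as [z [Hz <-]].
    rewrite extension_f by exact Hz.
    pose proof (conjugacy_range _ _ _ _ _ HH z Hz) as HHz.
    destruct (Rle_lt_dec 0 y) as [Hy0|Hy0].
    + rewrite extension_nonneg by exact Hy0.
      pose proof (reversing_neg b g Hg (H z) HHz). pose proof (conjugacy_nonneg y).
      unfold Icc in *; lra.
    + destruct (reversing_onto_neg a f Hf y ltac:(lra)) as [w [Hw <-]].
      rewrite extension_f by exact Hw.
      pose proof (conjugacy_range _ _ _ _ _ HH w Hw) as HHw.
      assert (Hwz : w < z)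
        by (apply (decreasing_on_lt_rev (Icc (f a) a) f); [apply (reversing_dec a f Hf)|..];
            auto; apply reversing_Icc_0; auto; unfold Icc; lra).
      apply (reversing_dec b g Hg); try (apply reversing_Icc_0; auto; unfold Icc; lra).
      apply (conjugacy_inc _ _ _ _ _ HH); unfold Icc; lra.
Qed.

Lemma extension_maps x : Icc (f a) a x -> Icc (g b) b (extension x).
Proof.
  intros Hx. unfold Icc in Hx. pose proof (reversing_zero b g Hg). unfold Icc in *.
  destruct (Rle_lt_dec 0 x) as [Hx0|Hx0].
  - rewrite extension_nonneg by exact Hx0. pose proof (conjugacy_nonneg x). unfold Icc in *; lra.
  - destruct (reversing_onto_neg a f Hf x ltac:(lra)) as [z [Hz <-]].
    rewrite extension_f by exact Hz.
    pose proof (reversing_neg b g Hg (H z) (conjugacy_range _ _ _ _ _ HH z Hz)). lra.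
Qed.

Lemma extension_onto y : Icc (g b) b y -> exists x, Icc (f a) a x /\ extension x = y.
Proof.
  intros Hy. pose proof (reversing_zero a f Hf). unfold Icc in *.
  destruct (Rlt_or_le y 0) as [Hy0|Hy0].
  - destruct (reversing_onto_neg b g Hg y ltac:(lra)) as [w [Hw <-]].
    destruct (conjugacy_onto _ _ _ _ _ HH w Hw) as [z [Hz <-]].
    exists (f z). rewrite extension_f by exact Hz.
    pose proof (reversing_neg a f Hf z Hz). split; [lra|reflexivity].
  - destruct (Req_dec y 0) as [->|Hne].
    + exists 0. rewrite extension_nonneg by lra. split; [lra|apply (conjugacy_fix _ _ _ _ _ HH)].
    + destruct (conjugacy_onto _ _ _ _ _ HH y ltac:(lra)) as [x [Hx <-]].
      exists x. rewrite extension_nonneg by lra. split; [lra|reflexivity].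
Qed.

Lemma extension_eq x : Icc (f a) a x -> g (extension x) = extension (f x).
Proof.
  intros Hx. unfold Icc in Hx. pose proof (reversing_fix a f Hf) as Hf0.
  destruct (Rtotal_order x 0) as [Hneg|[->|Hpos]].
  - destruct (reversing_onto_neg a f Hf x ltac:(lra)) as [z [Hz <-]].
    pose proof (reversing_pos_of_neg a f Hf (f z) (reversing_neg a f Hf z Hz)).
    rewrite extension_f, extension_nonneg by lra.
    symmetry; apply (conjugacy_eq _ _ _ _ _ HH); unfold Icc; lra.
  - rewrite Hf0, extension_nonneg, (conjugacy_fix _ _ _ _ _ HH) by lra.
    apply (reversing_fix b g Hg).
  - rewrite extension_f, extension_nonneg by lra. reflexivity.
Qed.

End Extension.

Theorem theorem6 (a b : R) (f g : R -> R) :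
  0 < a -> 0 < b ->
  (* g : I -> I, I = [g(b), b], decreasing homeomorphism onto g(I) ⊆ I *)
  (forall x, Icc (g b) b x -> Icc (g b) b (g x)) ->
  decreasing_on (Icc (g b) b) g ->
  homeo_onto (Icc (g b) b) (image g (Icc (g b) b)) g ->
  (* f : J -> J, J = [f(a), a], decreasing homeomorphism onto f(J) ⊆ J *)
  (forall x, Icc (f a) a x -> Icc (f a) a (f x)) ->
  decreasing_on (Icc (f a) a) f ->
  homeo_onto (Icc (f a) a) (image f (Icc (f a) a)) f ->
  (* (1) *)
  attracting_fixed_point (Icc (f a) a) f 0 ->
  attracting_fixed_point (Icc (g b) b) g 0 ->
  (* (2), (3) *)
  (forall x, 0 < x <= b -> g (g x) < x) ->
  (forall x, 0 < x <= a -> f (f x) < x) ->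
  exists h : R -> R,
    homeo_onto (Icc (f a) a) (Icc (g b) b) h /\
    forall x, Icc (f a) a x -> g (h x) = h (f x).
Proof.
  intros Ha Hb g_maps g_dec [_ [_ [_ [_ [_ [g_cont _]]]]]]
    f_maps f_dec [_ [_ [_ [_ [_ [f_cont _]]]]]] [f_zero [f_fix _]] [g_zero [g_fix _]]
    g_below f_below.
  assert (Hf : reversing_map a f) by (constructor; assumption).
  assert (Hg : reversing_map b g) by (constructor; assumption).
  pose proof (conjugacy_spec a b _ _ (reversing_square_contraction a f Hf f_below)
    (reversing_square_contraction b g Hg g_below)) as HH.
  exists (extension a f g (conjugacy a b (fun x => f (f x)) (fun x => g (g x)))).
  split.
  - apply increasing_onto_homeo.
    + exact (extension_inc a b f g _ Hf Hg HH).
    + exact (extension_maps a b f g _ Hf Hg HH).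
    + exact (extension_onto a b f g _ Hf Hg HH).
  - exact (extension_eq a b f g _ Hf Hg HH).
Qed.
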